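(* For every integer $m\geq 0$, $S_m\subseteq\Lambda_m$.
   Context: $\mathbb{N}=\{1,2,3,\dots\}$, $\mathbb{N}_0=\mathbb{N}\cup\{0\}$. The Collatz map $T:\mathbb{N}\to\mathbb{N}$ is $T(n)=\frac{3n+1}{2}$ if $n$ is odd and $T(n)=\frac{n}{2}$ if $n$ is even; $T^{(k)}$ denotes the $k$-fold composition. The total stopping time is $\sigma_\infty(1)=0$ and, for $n\geq 2$, $\sigma_\infty(n)=\inf\{k\in\mathbb{N}\cup\{\infty\} : T^{(k)}(n)=1\}$. Let $S_0=\{1\}$ and $S_k=\{n\in\mathbb{N}:\sigma_\infty(n)=k\}$ for $k\geq 1$. For $0\leq m\leq 3$ let $\Lambda_m=\{2^m\}$, and for $m\geq 4$ let $\Lambda_m$ be the set of all $n\in\mathbb{N}$ that can be written as $n=\frac{2^m}{3^l}-\sum_{k=1}^{l}\frac{2^{b_k}}{3^k}$ for some integers $l,b_1,\dots,b_l\in\mathbb{N}_0$ with $0\leq l\leq m-3$ and $0\leq b_1<b_2<\cdots<b_l\leq m-4$. *)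

From mathcomp Require Import all_boot all_order all_algebra.
Set Implicit Arguments. Unset Strict Implicit. Unset Printing Implicit Defensive.
Import Order.TTheory GRing.Theory Num.Theory.

Definition collatzT (n : nat) : nat := if odd n then (3 * n + 1)./2 else n./2.

Definition collatzTk (k n : nat) : nat := iter k collatzT n.

(* S_k = { n in N : sigma_inf(n) = k }, with sigma_inf(1) = 0 and for n >= 2,
   sigma_inf(n) = least k >= 1 with T^(k)(n) = 1 (infinity if none). *)
Definition inS (k n : nat) : Prop :=
  if k == 0 then n = 1
  else [/\ 2 <= n, collatzTk k n = 1 & forall j, 1 <= j < k -> collatzTk j n <> 1].

(* Lambda_m as in the paper; b is the sequence b_1 < ... < b_l (b_k = nth 0 b (k-1)). *)
Definition inLambda (m n : nat) : Prop :=
  if m <= 3 then n = 2 ^ m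
  else exists (l : nat) (b : seq nat),
    [/\ l <= m - 3, size b = l, sorted ltn b, all (fun x => x <= m - 4) b &
        ((n%:R : rat) = (2 ^ m)%N%:R / (3 ^ l)%N%:R
                - \sum_(k < l) (2 ^ nth 0 b k)%N%:R / (3 ^ k.+1)%N%:R)%R].

(* If sigma_inf(n) = m >= 4, the orbit of n ends with 8 -> 4 -> 2 -> 1: the only
   preimage of 1 is 2, of 4 is 8, and of 2 besides 4 is 1, which minimality of
   the stopping time excludes.  So T^(m-3)(n) = 8.  Each odd step x -> (3x+1)/2
   at time j multiplies by 3 and adds 2^j to the affine identity
   3^l n + sum_i 3^(l-i) 2^(b_i) = 2^k T^(k)(n), where b_1 < ... < b_l are the
   times of the odd steps among the first k.  With k = m-3 the right side is
   2^m, and dividing by 3^l gives the representation of n in Lambda_m. *)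

From mathcomp Require Import all_boot all_order all_algebra.
From mathcomp Require Import zify.

Set Implicit Arguments.
Unset Strict Implicit.

Lemma collatzT_double n : 2 * collatzT n = if odd n then 3 * n + 1 else n.
Proof.
have := modn2 n; rewrite /collatzT -!divn2; case: (odd n) => /= ?; lia.
Qed.

Lemma collatzT_eq1 n : collatzT n = 1 -> n = 2.
Proof. by move=> Tn; have := collatzT_double n; rewrite Tn; case: ifP => _; lia. Qed.

Lemma collatzT_eq2 n : collatzT n = 2 -> n = 1 \/ n = 4.
Proof. by move=> Tn; have := collatzT_double n; rewrite Tn; case: ifP => _; lia. Qed.

Lemma collatzT_eq4 n : collatzT n = 4 -> n = 8.
Proof. by move=> Tn; have := collatzT_double n; rewrite Tn; case: ifP => _; lia. Qed.

Definition odd_steps (k n : nat) : seq nat :=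
  [seq j <- iota 0 k | odd (collatzTk j n)].

Definition collatz_offset (b : seq nat) : nat :=
  foldl (fun acc x => 3 * acc + 2 ^ x) 0 b.

Lemma odd_stepsS k n :
  odd_steps k.+1 n =
  if odd (collatzTk k n) then rcons (odd_steps k n) k else odd_steps k n.
Proof.
by rewrite /odd_steps -addn1 iotaD filter_cat /=; case: ifP; rewrite ?cats1 ?cats0.
Qed.

Lemma collatzTk_affine k n :
  3 ^ size (odd_steps k n) * n + collatz_offset (odd_steps k n)
  = 2 ^ k * collatzTk k n.
Proof.
elim: k => [|k IH]; first by rewrite /= mul1n addn0.
rewrite odd_stepsS /collatzTk iterS -/(collatzTk k n) expnS -mulnA mulnCA.
rewrite collatzT_double; case: ifP => _ //.
rewrite size_rcons /collatz_offset foldl_rcons -/(collatz_offset _) expnS.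
move: IH; set x := collatzTk k n; set s := 3 ^ _; set g := collatz_offset _.
nia.
Qed.

Lemma size_odd_steps k n : size (odd_steps k n) <= k.
Proof. by rewrite size_filter -[leqRHS](size_iota 0) count_size. Qed.

Lemma sorted_odd_steps k n : sorted ltn (odd_steps k n).
Proof. exact/sorted_filter/iota_ltn_sorted/ltn_trans. Qed.

Lemma mem_odd_steps k n j : j \in odd_steps k n -> j < k.
Proof. by rewrite mem_filter mem_iota => /and3P[]. Qed.

Lemma inS_collatzTk_last1 k n : inS k.+1 n -> collatzTk k n = 2.
Proof. by case=> _ T1 _; apply: collatzT_eq1; rewrite /collatzTk -iterS. Qed.

Lemma inS_collatzTk_last2 k n : inS k.+2 n -> collatzTk k n = 4.
Proof.
move=> Sn; have := inS_collatzTk_last1 Sn; rewrite /collatzTk iterS.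
case/collatzT_eq2=> [T1|//]; case: Sn => n_ge2 _ minimal.
case: k T1 minimal => [/= n1 | k T1 minimal]; first by rewrite n1 in n_ge2.
by have := minimal k.+1 (ltnW (ltnSn k.+1)).
Qed.

Lemma inS_collatzTk_last3 k n : inS k.+3 n -> collatzTk k n = 8.
Proof.
by move=> /inS_collatzTk_last2; rewrite /collatzTk iterS => /collatzT_eq4.
Qed.

Import GRing.Theory Num.Theory.
Local Open Scope ring_scope.

Lemma collatz_offset_ratE (R : numFieldType) (b : seq nat) :
  (collatz_offset b)%:R / (3 ^ size b)%N%:R
  = \sum_(k < size b) (2 ^ nth 0 b k)%N%:R / (3 ^ k.+1)%N%:R :> R.
Proof.
elim/last_ind: b => [|b x IH]; first by rewrite big_ord0 mul0r.
rewrite size_rcons big_ord_recr /= /collatz_offset foldl_rcons -/(collatz_offset b).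
rewrite nth_rcons ltnn eqxx.
under eq_bigr => i _ do rewrite nth_rcons ltn_ord.
rewrite -IH natrD mulrDl expnS !natrM; congr (_ + _).
by rewrite invfM mulrACA divff ?mul1r // pnatr_eq0.
Qed.

Lemma collatzTk_eq8_ratE (R : numFieldType) k n : collatzTk k n = 8%N ->
  n%:R = (2 ^ k.+3)%N%:R / (3 ^ size (odd_steps k n))%N%:R
         - \sum_(i < size (odd_steps k n))
             (2 ^ nth 0 (odd_steps k n) i)%N%:R / (3 ^ i.+1)%N%:R :> R.
Proof.
move=> T8; rewrite -collatz_offset_ratE.
have := collatzTk_affine k n; rewrite T8; set b := odd_steps k n => affine.
have three_pow_neq0 : (3 ^ size b)%N%:R != 0 :> R by rewrite pnatr_eq0 expn_eq0.
apply: (mulIf three_pow_neq0); rewrite mulrBl !divfK // -natrM mulnC.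
have -> : (2 ^ k.+3 = 2 ^ k * 8)%N by rewrite !expnS; lia.
by rewrite -affine natrD addrK.
Qed.

Theorem mainTheorem3 : forall (m n : nat), inS m n -> inLambda m n.
Proof.
move=> m n; rewrite /inLambda; case: m => [|[|[|[|k]]]] /= Sn.
- exact: Sn.
- exact: inS_collatzTk_last1 Sn.
- exact: inS_collatzTk_last2 Sn.
- exact: inS_collatzTk_last3 Sn.
exists (size (odd_steps k.+1 n)), (odd_steps k.+1 n); split=> //.
- by have := size_odd_steps k.+1 n; lia.
- exact: sorted_odd_steps.
- by apply/allP => j /mem_odd_steps; lia.
- exact/collatzTk_eq8_ratE/inS_collatzTk_last3.
Qed.
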